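(* Let $A,B,C,D,E,F$ be six points on a rectangular hyperbola $\mathcal{H}$. Suppose that the triangles $ABC$ and $DEF$ are orthologic, and that one of the two orthology centers lies on $\mathcal{H}$. Then the other orthology center also lies on $\mathcal{H}$.
   Context: A rectangular hyperbola is a hyperbola with perpendicular asymptotes. Triangles $ABC$ and $DEF$ are orthologic if the perpendiculars from $D,E,F$ to $BC, CA, AB$ respectively are concurrent; in that case the perpendiculars from $A,B,C$ to $EF, FD, DE$ respectively are also concurrent. The two points of concurrency are called the orthology centers. *)

From mathcomp Require Import all_boot all_order all_algebra.
Set Implicit Arguments. Unset Strict Implicit. Unset Printing Implicit Defensive.
Import Order.TTheory GRing.Theory Num.Theory.
Local Open Scope ring_scope.

Section Geo.
Variable R : realFieldType.

Definition dot (u v : R * R) : R := u.1 * v.1 + u.2 * v.2.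
Definition vsub (u v : R * R) : R * R := (u.1 - v.1, u.2 - v.2).

Definition collinear (A B C : R * R) : Prop :=
  (B.1 - A.1) * (C.2 - A.2) - (B.2 - A.2) * (C.1 - A.1) = 0.

Definition on_conic (a b c d e f : R) (P : R * R) : Prop :=
  a * P.1 ^+ 2 + b * P.1 * P.2 + c * P.2 ^+ 2 + d * P.1 + e * P.2 + f = 0.

(* determinant of the symmetric matrix
   [[a, b/2, d/2]; [b/2, c, e/2]; [d/2, e/2, f]] *)
Definition conic_det (a b c d e f : R) : R :=
  a * (c * f - (e / 2) ^+ 2) - (b / 2) * ((b / 2) * f - (e / 2) * (d / 2))
  + (d / 2) * ((b / 2) * (e / 2) - c * (d / 2)).

(* a (non-degenerate) hyperbola whose asymptotes are perpendicular *)
Definition rect_hyperbola (a b c d e f : R) : Prop :=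
  [/\ conic_det a b c d e f != 0, b ^+ 2 - 4 * a * c > 0 & a + c = 0].

Definition orthology_center (A B C D E F P : R * R) : Prop :=
  [/\ dot (vsub P D) (vsub C B) = 0,
      dot (vsub P E) (vsub A C) = 0 &
      dot (vsub P F) (vsub B A) = 0].
End Geo.

(* A rectangular hyperbola is the zero set of S = a (x^2 - y^2) + b x y + d x + e y + f,
   a combination of the harmonic polynomials of degree at most 2 (only a + c = 0 is
   used, not the non-degeneracy conditions of [rect_hyperbola]).  For orthologic
   triangles ABC, DEF with centers P, Q, the weighted points
     [ABC] P + [DEF] Q   and   [PEF] A + [DPF] B + [DEP] C + [QBC] D + [AQC] E + [ABQ] F,
   weighted by signed areas, have the same moments against every such S.  When the six
   vertices lie on the hyperbola the second sum vanishes, so [ABC] S(P) + [DEF] S(Q) = 0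
   with both areas nonzero.  The moment identity becomes rational once we write
   D = P + al (C - B)^perp, E = P + be (A - C)^perp, F = P + ga (B - A)^perp:
   then [DEF] = sigma [ABC] and sigma Q = be ga A + ga al B + al be C,
   where sigma = al be + be ga + ga al. *)

From mathcomp Require Import all_boot all_order all_algebra.
From mathcomp Require Import ring.
Set Implicit Arguments.
Unset Strict Implicit.
Unset Printing Implicit Defensive.
Import Order.TTheory GRing.Theory Num.Theory.
Local Open Scope ring_scope.

Section Plane.
Variable R : realFieldType.
Implicit Types (u v w x A B C D E F P Q : R * R) (t : R).

Definition cross u v : R := u.1 * v.2 - u.2 * v.1.

Definition signed_area A B C : R := cross (vsub B A) (vsub C A).

Definition conic_val (a b c d e f : R) P : R :=
  a * P.1 ^+ 2 + b * P.1 * P.2 + c * P.2 ^+ 2 + d * P.1 + e * P.2 + f.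

Lemma on_conicE a b c d e f P :
  on_conic a b c d e f P = (conic_val a b c d e f P = 0).
Proof. by []. Qed.

Definition perp_point P w t : R * R := (P.1 + t * w.2, P.2 - t * w.1).

Lemma cross_vsub_sides D E F : cross (vsub F E) (vsub D F) = signed_area D E F.
Proof. by rewrite /signed_area /cross /vsub /=; ring. Qed.

Lemma dot_self_eq0 w : (dot w w == 0) = (w == (0, 0)).
Proof.
case: w => w1 w2; rewrite /dot /= -!expr2 paddr_eq0 ?sqr_ge0 //.
by rewrite !sqrf_eq0 xpair_eqE.
Qed.

Lemma exists_perp_point P D w :
  w != (0, 0) -> dot (vsub P D) w = 0 -> exists t, D = perp_point P w t.
Proof.
rewrite -dot_self_eq0 => ww_neq0 Dperp.
exists (cross w (vsub P D) / dot w w).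
case: D P w ww_neq0 Dperp => d1 d2 [p1 p2] [w1 w2].
rewrite /perp_point /dot /cross /= => ww_neq0 Dperp.
congr (_, _); apply: (mulIf ww_neq0); rewrite mulrDl ?mulNr mulrAC divfK //;
  apply/eqP; rewrite -subr_eq0.
- by rewrite -(mulr0 (- w1)) -Dperp; apply/eqP; ring.
- by rewrite -(mulr0 (- w2)) -Dperp; apply/eqP; ring.
Qed.

Lemma perp2_eq0 x u v :
  cross u v != 0 -> dot x u = 0 -> dot x v = 0 -> x = (0, 0).
Proof.
case: x u v => x1 x2 [u1 u2] [v1 v2]; rewrite /cross /dot /= => uv_neq0 xu xv.
have x1E : x1 * (u1 * v2 - u2 * v1) =
    v2 * (x1 * u1 + x2 * u2) - u2 * (x1 * v1 + x2 * v2) by ring.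
have x2E : x2 * (u1 * v2 - u2 * v1) =
    u1 * (x1 * v1 + x2 * v2) - v1 * (x1 * u1 + x2 * u2) by ring.
move: x1E x2E; rewrite xu xv !mulr0 subrr => /eqP + /eqP.
by rewrite !mulf_eq0 (negPf uv_neq0) !orbF => /eqP-> /eqP->.
Qed.

Lemma noncollinear_vsub_neq0 A B C : ~ collinear A B C ->
  [/\ vsub C B != (0, 0), vsub A C != (0, 0) & vsub B A != (0, 0)].
Proof.
case: A B C => [a1 a2] [b1 b2] [c1 c2]; rewrite /collinear /vsub /= => ncABC.
by split; rewrite xpair_eqE !subr_eq0; apply/negP => /andP[/eqP e1 /eqP e2];
  apply: ncABC; rewrite e1 e2; ring.
Qed.

Section PerpendicularPoints.
Variables (A B C P : R * R) (al be ga : R).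
Local Notation D := (perp_point P (vsub C B) al).
Local Notation E := (perp_point P (vsub A C) be).
Local Notation F := (perp_point P (vsub B A) ga).
Local Notation sigma := (al * be + be * ga + ga * al).
Local Notation Qs := (be * ga * A.1 + ga * al * B.1 + al * be * C.1,
                      be * ga * A.2 + ga * al * B.2 + al * be * C.2).

Lemma signed_area_perp_points : signed_area D E F = signed_area A B C * sigma.
Proof. by rewrite /signed_area /cross /vsub /perp_point /=; ring. Qed.

Lemma perp_points_weight_neq0 : ~ collinear D E F -> sigma != 0.
Proof.
move=> ncDEF; apply/eqP => sigma0; apply: ncDEF.
rewrite /collinear -[LHS]/(signed_area _ _ _) signed_area_perp_points.
by rewrite sigma0 mulr0.
Qed.

Lemma perp_points_center Q : ~ collinear D E F ->
  orthology_center D E F A B C Q -> Q = (Qs.1 / sigma, Qs.2 / sigma).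
Proof.
move=> ncDEF [hA hB _].
have sigma_neq0 := perp_points_weight_neq0 ncDEF.
have nc : cross (vsub F E) (vsub D F) != 0 by rewrite cross_vsub_sides; apply/eqP.
case: Q hA hB => q1 q2 hA hB.
have [] : (sigma * q1 - Qs.1, sigma * q2 - Qs.2) = (0, 0).
  apply: (perp2_eq0 nc).
  - by rewrite -(mulr0 sigma) -hA /dot /vsub /perp_point /=; ring.
  - by rewrite -(mulr0 sigma) -hB /dot /vsub /perp_point /=; ring.
move=> /eqP + /eqP; rewrite !subr_eq0 => /eqP <- /eqP <-.
by rewrite !(mulrC sigma) !mulfK.
Qed.

End PerpendicularPoints.

Section HarmonicMoments.
Variables a b d e f : R.
Local Notation S := (conic_val a b (- a) d e f).

Lemma orthologic_harmonic_moments A B C D E F P Q :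
  ~ collinear A B C -> ~ collinear D E F ->
  orthology_center A B C D E F P -> orthology_center D E F A B C Q ->
  signed_area A B C * S P + signed_area D E F * S Q =
    signed_area P E F * S A + signed_area D P F * S B + signed_area D E P * S C
  + signed_area Q B C * S D + signed_area A Q C * S E + signed_area A B Q * S F.
Proof.
move=> ncABC ncDEF [hD hE hF] hQ.
have [nCB nAC nBA] := noncollinear_vsub_neq0 ncABC.
have [al Dal] := exists_perp_point nCB hD.
have [be Ebe] := exists_perp_point nAC hE.
have [ga Fga] := exists_perp_point nBA hF.
subst D E F.
have sigma_neq0 := perp_points_weight_neq0 ncDEF.
rewrite (perp_points_center ncDEF hQ).
by rewrite /conic_val /signed_area /cross /vsub /perp_point /=; field.
Qed.

End HarmonicMoments.
End Plane.

Theorem proposition2p6 (R : realFieldType) (a b c d e f : R)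
    (A B C D E F P Q : R * R) :
  rect_hyperbola a b c d e f ->
  on_conic a b c d e f A -> on_conic a b c d e f B -> on_conic a b c d e f C ->
  on_conic a b c d e f D -> on_conic a b c d e f E -> on_conic a b c d e f F ->
  ~ collinear A B C -> ~ collinear D E F ->
  orthology_center A B C D E F P ->
  orthology_center D E F A B C Q ->
  (on_conic a b c d e f P <-> on_conic a b c d e f Q).
Proof.
case=> _ _ /eqP; rewrite addrC addr_eq0 => /eqP ->.
rewrite !on_conicE => hA hB hC hD hE hF ncABC ncDEF hP hQ.
have := orthologic_harmonic_moments a b d e f ncABC ncDEF hP hQ.
rewrite hA hB hC hD hE hF !mulr0 !addr0 => moments.
have nABC : signed_area A B C != 0 by apply/eqP.
have nDEF : signed_area D E F != 0 by apply/eqP.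
split=> [SP | SQ]; move: moments;
  [rewrite SP mulr0 add0r | rewrite SQ mulr0 addr0];
  by move/eqP; rewrite mulf_eq0 ?(negPf nABC) ?(negPf nDEF) => /eqP.
Qed.
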